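(* Let $01234$ be a convex pentagon inscribed in a circle of radius $R$, with vertices in cyclic order and area $A$. Let $$a_0=|23|,\quad a_1=|34|,\quad a_2=|40|,\quad a_3=|01|,\quad a_4=|12|,$$ and let $X=|14|$. Put $p=a_2a_3$, $P=a_0a_1a_4$, $Q=a_0^2+a_1^2+a_4^2$, and $S=(a_0a_1)^2+(a_0a_4)^2+(a_1a_4)^2$. Then $$(4AR-pX)^2=PX^3+SX^2+PQX+P^2.$$
   Context: $|ij|$ denotes the distance between vertices $i$ and $j$. *)

From HB Require Import structures.
From mathcomp Require Import all_boot all_order all_algebra.
Set Implicit Arguments. Unset Strict Implicit. Unset Printing Implicit Defensive.
Import Order.TTheory GRing.Theory Num.Theory.
Local Open Scope ring_scope.

Section Plane.
Variable R : rcfType.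
Definition point := (R * R)%type.

Definition dist (p q : point) : R :=
  Num.sqrt ((p.1 - q.1) ^+ 2 + (p.2 - q.2) ^+ 2).

(* orientation: twice the signed area of triangle o a b *)
Definition orient (o a b : point) : R :=
  (a.1 - o.1) * (b.2 - o.2) - (a.2 - o.2) * (b.1 - o.1).

Definition convex_polygon (n : nat) (V : 'I_n -> point) : Prop :=
  (forall i j : 'I_n, j != i -> j != ordS i -> 0 < orient (V i) (V (ordS i)) (V j))
  \/
  (forall i j : 'I_n, j != i -> j != ordS i -> orient (V i) (V (ordS i)) (V j) < 0).

Definition inscribed (n : nat) (V : 'I_n -> point) (r : R) : Prop :=
  0 < r /\ exists c : point, forall i : 'I_n, dist (V i) c = r.

Definition polygon_area (n : nat) (V : 'I_n -> point) : R :=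
  `| \sum_(i < n) ((V i).1 * (V (ordS i)).2 - (V (ordS i)).1 * (V i).2) | / 2.
End Plane.

(* Split the pentagon along the diagonals 13 and 14 into the triangles 123, 341
   and 401.  For a triangle inscribed in a circle of radius R the product of
   its sides is 4R times its area, so 4AR = d (a4 a0 + a1 X) + a2 a3 X with
   d = |13|, i.e. 4AR - pX = d (a0 a4 + a1 X).  In the cyclic quadrilateral
   1234 the inscribed angles at 2 and 4 are supplementary, so the two laws of
   cosines for the diagonal 13 combine into
   d^2 (a0 a4 + a1 X) = a1 X (a0^2 + a4^2) + a0 a4 (a1^2 + X^2),
   and multiplying by a0 a4 + a1 X gives the identity. *)
From mathcomp Require Import all_boot all_order all_algebra.
From mathcomp Require Import ring lra.
Import Order.TTheory GRing.Theory Num.Theory.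
Set Implicit Arguments.
Unset Strict Implicit.
Local Open Scope ring_scope.

Section InscribedPolygons.
Variable R : rcfType.
Implicit Types (p q s t c : point R) (r : R).

Definition sqdist p q : R := (p.1 - q.1) ^+ 2 + (p.2 - q.2) ^+ 2.

Definition dot (o a b : point R) : R :=
  (a.1 - o.1) * (b.1 - o.1) + (a.2 - o.2) * (b.2 - o.2).

(* The 4x4 determinant with rows (x, y, |(x, y) - c|^2, 1), expanded along
   its third column; it vanishes when the four points lie on a circle
   centred at c, the third column then being constant. *)
Definition cocircular_det c p q s t : R :=
  sqdist p c * orient q s t - sqdist q c * orient p s t
  + sqdist s c * orient p q t - sqdist t c * orient p q s.

Lemma sqr_dist p q : dist p q ^+ 2 = sqdist p q.
Proof. by rewrite sqr_sqrtr // addr_ge0 // sqr_ge0. Qed.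

Lemma dist_ge0 p q : 0 <= dist p q.
Proof. exact: sqrtr_ge0. Qed.

Lemma distC p q : dist p q = dist q p.
Proof. by rewrite /dist; congr Num.sqrt; ring. Qed.

Lemma dist_eq0 p q : dist p q = 0 -> p = q.
Proof.
case: p q => [p1 p2] [q1 q2]; move/eqP; rewrite sqrtr_eq0 => sq_le0.
have /eqP : sqdist (p1, p2) (q1, q2) = 0.
  by apply/eqP; rewrite eq_le sq_le0 addr_ge0 ?sqr_ge0.
by rewrite paddr_eq0 ?sqr_ge0 // !sqrf_eq0 !subr_eq0 /= => /andP[/eqP -> /eqP ->].
Qed.

Lemma law_of_cosines o a b :
  dist a b ^+ 2 = dist a o ^+ 2 + dist o b ^+ 2 - 2 * dot o a b.
Proof. by rewrite !sqr_dist /sqdist /dot; ring. Qed.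

Lemma circumcenter_cramer p q s c :
  sqdist q c = sqdist p c -> sqdist s c = sqdist p c ->
  2 * orient p q s * (c.1 - p.1)
    = sqdist q p * (s.2 - p.2) - sqdist s p * (q.2 - p.2) /\
  2 * orient p q s * (c.2 - p.2)
    = sqdist s p * (q.1 - p.1) - sqdist q p * (s.1 - p.1).
Proof.
have chord x : sqdist x c = sqdist p c -> sqdist x p = 2 * dot p x c.
  move=> hx; apply/eqP; rewrite -subr_eq0.
  have -> : sqdist x p - 2 * dot p x c = sqdist x c - sqdist p c.
    by rewrite /sqdist /dot; ring.
  by rewrite hx subrr.
move=> /chord -> /chord ->; rewrite /orient /dot; split; ring.
Qed.

Lemma sqdist_triangle_circumcenter p q s c :
  sqdist q c = sqdist p c -> sqdist s c = sqdist p c ->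
  sqdist p q * sqdist q s * sqdist s p = 4 * sqdist p c * orient p q s ^+ 2.
Proof.
move=> hq hs; have [e1 e2] := circumcenter_cramer hq hs.
transitivity ((2 * orient p q s * (c.1 - p.1)) ^+ 2
              + (2 * orient p q s * (c.2 - p.2)) ^+ 2); last by rewrite /sqdist; ring.
by rewrite e1 e2 /sqdist; ring.
Qed.

Lemma on_circle_sqdist x c r : dist x c = r -> sqdist x c = r ^+ 2.
Proof. by move=> <-; rewrite sqr_dist. Qed.

Lemma dist_triangle_circumradius p q s c r :
  dist p c = r -> dist q c = r -> dist s c = r ->
  dist p q * dist q s * dist s p = 2 * r * `|orient p q s|.
Proof.
move=> hp hq hs; have r_ge0 : 0 <= r by rewrite -hp dist_ge0.
have hq2 : sqdist q c = sqdist p c by rewrite (on_circle_sqdist hq) (on_circle_sqdist hp).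
have hs2 : sqdist s c = sqdist p c by rewrite (on_circle_sqdist hs) (on_circle_sqdist hp).
apply/eqP; rewrite -(@eqrXn2 _ 2) ?mulr_ge0 ?dist_ge0 //.
rewrite !exprMn !sqr_dist (sqdist_triangle_circumcenter hq2 hs2).
by rewrite (on_circle_sqdist hp) real_normK ?num_real //; apply/eqP; ring.
Qed.

Lemma dot_orient_cocircular_det c p q s t :
  dot t p s * orient p q s + dot q p s * orient s t p = - cocircular_det c p q s t.
Proof.
by case: c p q s t => [c1 c2] [p1 p2] [q1 q2] [s1 s2] [t1 t2];
   rewrite /cocircular_det /dot /orient /sqdist /=; ring.
Qed.

Lemma cocircular_det_circle c p q s t (rho : R) :
  sqdist p c = rho -> sqdist q c = rho -> sqdist s c = rho -> sqdist t c = rho ->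
  cocircular_det c p q s t = 0.
Proof. by rewrite /cocircular_det => -> -> -> ->; rewrite /orient; ring. Qed.

Lemma norm_mulC_same_sign (x y : R) : 0 <= x * y -> `|x| * y = x * `|y|.
Proof.
have [x_ge0|x_lt0] := lerP 0 x; have [y_ge0|y_lt0] := lerP 0 y => xy_ge0.
- by rewrite !ger0_norm.
- by rewrite ger0_norm // ltr0_norm //; nra.
- by rewrite ltr0_norm // ger0_norm //; nra.
- by rewrite !ltr0_norm //; ring.
Qed.

(* The inscribed angles at q and t on the chord ps are supplementary. *)
Lemma inscribed_angles_supplementary p q s t c r :
  dist p c = r -> dist q c = r -> dist s c = r -> dist t c = r ->
  0 < orient p q s * orient s t p ->
  dot t p s * `|orient p q s| + dot q p s * `|orient s t p| = 0.
Proof.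
move=> /on_circle_sqdist hp /on_circle_sqdist hq /on_circle_sqdist hs
       /on_circle_sqdist ht.
set o1 := orient p q s; set o2 := orient s t p => same_side.
have o1_neq0 : o1 != 0.
  by apply/eqP => o1_eq0; move: same_side; rewrite o1_eq0 mul0r ltxx.
have norm_swap : `|o2| * o1 = o2 * `|o1|.
  by apply: norm_mulC_same_sign; rewrite mulrC ltW.
apply: (mulIf o1_neq0); rewrite mul0r.
transitivity (`|o1| * (dot t p s * o1 + dot q p s * o2)).
  by rewrite mulrDl -[dot q p s * _ * _]mulrA norm_swap; ring.
by rewrite (dot_orient_cocircular_det c) (cocircular_det_circle hp hq hs ht) oppr0 mulr0.
Qed.

Lemma cyclic_quadrilateral_diagonal p q s t c r :
  dist p c = r -> dist q c = r -> dist s c = r -> dist t c = r ->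
  0 < orient p q s * orient s t p ->
  dist p s ^+ 2 * (dist p q * dist q s + dist s t * dist t p)
  = dist s t * dist t p * (dist p q ^+ 2 + dist q s ^+ 2)
    + dist p q * dist q s * (dist s t ^+ 2 + dist t p ^+ 2).
Proof.
move=> hp hq hs ht same_side.
have dps_neq0 : dist p s != 0.
  apply/eqP => /dist_eq0 eq_ps; move: same_side.
  by rewrite eq_ps [orient s q s]/orient !subrr !mulr0 subrr mul0r ltxx.
have angles := inscribed_angles_supplementary hp hq hs ht same_side.
have cos_q := law_of_cosines q p s.
have cos_t := law_of_cosines t s p.
have dot_tC : dot t s p = dot t p s by rewrite /dot mulrC [X in _ + X]mulrC.
have cos_rel : dot t p s * (dist p q * dist q s) + dot q p s * (dist s t * dist t p) = 0.
  have T1 := dist_triangle_circumradius hp hq hs.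
  have T2 := dist_triangle_circumradius hs ht hp.
  rewrite (distC s p) in T1.
  apply: (mulIf dps_neq0); rewrite mul0r.
  transitivity (dot t p s * (dist p q * dist q s * dist p s)
                + dot q p s * (dist s t * dist t p * dist p s)); first ring.
  rewrite T1 T2; transitivity (2 * r * (dot t p s * `|orient p q s|
                                        + dot q p s * `|orient s t p|)); first ring.
  by rewrite angles mulr0.
rewrite (distC s p) dot_tC in cos_t.
apply/eqP; rewrite -subr_eq0; apply/eqP.
transitivity
  (dist s t * dist t p * (dist p s ^+ 2 - (dist p q ^+ 2 + dist q s ^+ 2 - 2 * dot q p s))
   + dist p q * dist q s * (dist p s ^+ 2 - (dist s t ^+ 2 + dist t p ^+ 2 - 2 * dot t p s))
   - 2 * (dot t p s * (dist p q * dist q s) + dot q p s * (dist s t * dist t p)));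
  first ring.
by rewrite -cos_q -cos_t cos_rel !subrr; ring.
Qed.

Lemma convex_polygon_orient_same_sign n (V : 'I_n -> point R) i j k l :
  convex_polygon V -> j != i -> j != ordS i -> l != k -> l != ordS k ->
  0 < orient (V i) (V (ordS i)) (V j) * orient (V k) (V (ordS k)) (V l).
Proof.
case=> convV ji jSi lk lSk; first by rewrite mulr_gt0 ?convV.
by rewrite nmulr_rgt0 ?convV.
Qed.

Lemma normD3_same_sign (x y z : R) :
  0 < x * y -> 0 < x * z -> `|x + y + z| = `|x| + `|y| + `|z|.
Proof.
have [x_gt0|x_lt0|->] := ltrgt0P x; last by rewrite mul0r ltxx.
- rewrite !pmulr_rgt0 // => y_gt0 z_gt0.
  by rewrite !gtr0_norm // !addr_gt0.
- rewrite !nmulr_rgt0 // => y_lt0 z_lt0.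
  by rewrite !ltr0_norm ?opprD //; lra.
Qed.

End InscribedPolygons.

Lemma inord_eq n (j k : nat) :
  (j <= n)%N -> (k <= n)%N -> ((inord j : 'I_n.+1) == inord k) = (j == k).
Proof. by move=> jn kn; rewrite -val_eqE /= !inordK. Qed.

Lemma ordS_inord n (k : nat) :
  (k <= n)%N -> ordS (inord k : 'I_n.+1) = inord (k.+1 %% n.+1).
Proof. by move=> kn; apply/val_inj; rewrite /= !inordK ?ltn_mod. Qed.

Lemma polygon_area5_fan (R : rcfType) (V : 'I_5 -> point R) :
  polygon_area V = `| orient (V (inord 1)) (V (inord 2)) (V (inord 3))
                     + orient (V (inord 3)) (V (inord 4)) (V (inord 1))
                     + orient (V (inord 4)) (V (inord 0)) (V (inord 1)) | / 2.
Proof.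
rewrite /polygon_area; congr (`|_| / 2).
rewrite (eq_bigr (fun i : 'I_5 => let u := V (inord i) in
                                   let w := V (inord (i.+1 %% 5)) in
                                   u.1 * w.2 - w.1 * u.2)); last first.
  by move=> i _; rewrite /= -ordS_inord ?inord_val // -ltnS.
by rewrite !big_ord_recl big_ord0 /= /orient; ring.
Qed.

Lemma convex_pentagon_fan_orient (R : rcfType) (V : 'I_5 -> point R) :
  convex_polygon V ->
  0 < orient (V (inord 1)) (V (inord 2)) (V (inord 3))
      * orient (V (inord 3)) (V (inord 4)) (V (inord 1)) /\
  0 < orient (V (inord 1)) (V (inord 2)) (V (inord 3))
      * orient (V (inord 4)) (V (inord 0)) (V (inord 1)).
Proof.
move=> convV.
have S1 : ordS (inord 1 : 'I_5) = inord 2 by rewrite ordS_inord.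
have S3 : ordS (inord 3 : 'I_5) = inord 4 by rewrite ordS_inord.
have S4 : ordS (inord 4 : 'I_5) = inord 0 by rewrite ordS_inord.
split; [rewrite -S1 -S3 | rewrite -S1 -S4];
  by apply: convex_polygon_orient_same_sign; rewrite ?S1 ?S3 ?S4 ?inord_eq.
Qed.

Theorem proposition4 (R : rcfType) (V : 'I_5 -> point R) (r A : R) :
  convex_polygon V -> inscribed V r -> A = polygon_area V ->
  let a0 := dist (V (inord 2)) (V (inord 3)) in
  let a1 := dist (V (inord 3)) (V (inord 4)) in
  let a2 := dist (V (inord 4)) (V (inord 0)) in
  let a3 := dist (V (inord 0)) (V (inord 1)) in
  let a4 := dist (V (inord 1)) (V (inord 2)) in
  let X := dist (V (inord 1)) (V (inord 4)) in
  let p := a2 * a3 in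
  let P := a0 * a1 * a4 in
  let Q := a0 ^+ 2 + a1 ^+ 2 + a4 ^+ 2 in
  let S := (a0 * a1) ^+ 2 + (a0 * a4) ^+ 2 + (a1 * a4) ^+ 2 in
  (4 * A * r - p * X) ^+ 2 = P * X ^+ 3 + S * X ^+ 2 + P * Q * X + P ^+ 2.
Proof.
move=> convV [_ [c onC]] -> a0 a1 a2 a3 a4 X p P Q S.
have [same13 same14] := convex_pentagon_fan_orient convV.
set d := dist (V (inord 1)) (V (inord 3)).
have T123 := dist_triangle_circumradius (onC (inord 1)) (onC (inord 2)) (onC (inord 3)).
have T341 := dist_triangle_circumradius (onC (inord 3)) (onC (inord 4)) (onC (inord 1)).
have T401 := dist_triangle_circumradius (onC (inord 4)) (onC (inord 0)) (onC (inord 1)).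
have fan : 4 * polygon_area V * r - p * X = d * (a4 * a0 + a1 * X).
  rewrite polygon_area5_fan normD3_same_sign //.
  rewrite (distC (V (inord 4)) (V (inord 1))) (distC (V (inord 3)) (V (inord 1)))
    in T123 T341 T401.
  transitivity (2 * r * `|orient (V (inord 1)) (V (inord 2)) (V (inord 3))|
                + 2 * r * `|orient (V (inord 3)) (V (inord 4)) (V (inord 1))|
                + 2 * r * `|orient (V (inord 4)) (V (inord 0)) (V (inord 1))| - p * X).
    by field.
  by rewrite -T123 -T341 -T401 /p /X /d /a0 /a1 /a2 /a3 /a4; ring.
have diag : d ^+ 2 * (a4 * a0 + a1 * X)
            = a1 * X * (a4 ^+ 2 + a0 ^+ 2) + a4 * a0 * (a1 ^+ 2 + X ^+ 2).
  rewrite /X (distC (V (inord 1))).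
  exact: cyclic_quadrilateral_diagonal (onC _) (onC _) (onC _) (onC _) same13.
rewrite fan.
transitivity ((a4 * a0 + a1 * X) * (d ^+ 2 * (a4 * a0 + a1 * X))); first ring.
by rewrite diag /P /Q /S; ring.
Qed.
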